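(* Let $\Gamma$ be a connected finite hyperbolic oriented graph embedded in a Riemann surface $S$ with boundary, and let $C$ be a simple closed path of $\Gamma$. Let $\pi:\widetilde S\to S$ be the cutting surgery along $C$. Then $\pi^{-1}(\Gamma)$ is a finite hyperbolic graph.
   Context: A Riemann surface with boundary is a compact oriented surface possibly with boundary. An oriented graph has head/tail maps $h,t:E\to V$; it is hyperbolic if at each vertex the incident edges alternate, cyclically around the vertex, between incoming and outgoing. A simple closed path is a closed sequence of consecutive edges without self-intersection; it is a simple closed curve in $S$. Cutting surgery along a simple closed curve $C$ in $\mathrm{Int}(S)$: with a collar $C\times(-\epsilon,\epsilon)$, $\widetilde S=(S\setminus C)\sqcup C_1\sqcup C_2$, copies $C_1,C_2$ of $C$ attached as boundaries of $C\times(-\epsilon,0)$ and $C\times(0,\epsilon)$; $\pi$ is the identity on $S\setminus C$ and identifies $C_i$ with $C$. $\pi^{-1}(\Gamma)$ carries the graph structure whose vertices and edges are the preimages of vertices and edges of $\Gamma$, with orientations pulled back. *)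

From mathcomp Require Import all_boot.

Set Implicit Arguments.
Unset Strict Implicit.
Unset Printing Implicit Defensive.

(* A dart (half-edge) of an oriented graph with edge set E is a pair (e, b):
   b = true  : the end of e at its head  h e  (e is INCOMING there),
   b = false : the end of e at its tail  t e  (e is OUTGOING there). *)

Section Graph.
Variables (V E : finType) (h t : E -> V).

Definition dvert (d : E * bool) : V := if d.2 then h d.1 else t d.1.

(* A rotation system: the cyclic order (given by the orientation of the
   surface) of the darts around each vertex.  [r d] is the next dart after
   [d] around the vertex [dvert d]; the darts at each vertex form exactly one
   [r]-cycle. *)
Definition is_rotation (r : E * bool -> E * bool) : Prop :=
  [/\ injective r,
      forall d, dvert (r d) = dvert d &
      forall d d', dvert d = dvert d' -> fconnect r d d'].

Definition adjacent : rel V :=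
  fun x y => [exists e, ((t e == x) && (h e == y)) || ((h e == x) && (t e == y))].
Definition connected : Prop := forall x y, connect adjacent x y.

Definition simple_closed_path (c : seq E) : Prop :=
  [/\ c != [::], cycle (fun e f => h e == t f) c & uniq (map t c)].

End Graph.

(* hyperbolic: consecutive darts around every vertex alternate between
   incoming and outgoing *)
Definition hyperbolic (E : Type) (r : E * bool -> E * bool) : Prop :=
  forall d, (r d).2 = ~~ d.2.

Lemma andb_imply_l (a b : bool) : (a && b) ==> a.
Proof. by case: a; case: b. Qed.

Section Cut.
Variables (V E : finType) (h t : E -> V) (rot : E * bool -> E * bool)
          (c : seq E).

Definition onC (v : V) : bool := v \in map t c.

Definition firstC (d : E * bool) : E * bool :=
  head d [seq y <- traject rot (rot d) #|{: E * bool}| | y.1 \in c].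

(* side (true = left copy C_1, false = right copy C_2) of the preimage of the
   dart d: for a dart of C it is the copy bit s; for another dart at a
   vertex v of C it is true iff d lies strictly between the outgoing and the
   incoming C-dart at v (i.e. the next C-dart after d is incoming). *)
Definition dside (d : E * bool) (s : bool) : bool :=
  if d.1 \in c then s else (firstC d).2.

(* vertices of π^{-1}(Γ): (v,false) for every v, plus (v,true) for v on C *)
Definition cutV := {x : V * bool | x.2 ==> onC x.1}.
(* edges of π^{-1}(Γ): (e,false) for every e, plus (e,true) for e on C *)
Definition cutE := {x : E * bool | x.2 ==> (x.1 \in c)}.

Definition mkV (v : V) (s : bool) : cutV :=
  exist _ (v, onC v && s) (andb_imply_l (onC v) s).
Definition mkE (e : E) (s : bool) : cutE :=
  exist _ (e, (e \in c) && s) (andb_imply_l (e \in c) s).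

Definition cut_head (x : cutE) : cutV :=
  mkV (h (val x).1) (dside ((val x).1, true) (val x).2).
Definition cut_tail (x : cutE) : cutV :=
  mkV (t (val x).1) (dside ((val x).1, false) (val x).2).

(* rotation of π^{-1}(Γ) induced by the orientation of the cut surface:
   around a copy of a vertex of C, the darts of that side in the order of
   rot, closed up across the boundary curve (from the copy of the incoming
   C-dart to the copy of the outgoing one on the left side, and conversely
   on the right side). *)
Definition cut_rot (d : cutE * bool) : cutE * bool :=
  let x := ((val d.1).1, d.2) in
  let s := dside x (val d.1).2 in
  let y := if (x.1 \in c) && (x.2 == s) then firstC x else rot x in
  (mkE y.1 s, y.2).

End Cut.


Arguments cut_rot {E} rot c d.
Arguments cut_head {V E} h t rot c x.
Arguments cut_tail {V E} t rot c x.

From mathcomp Require Import all_boot.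

Set Implicit Arguments.
Unset Strict Implicit.
Unset Printing Implicit Defensive.

(* A dart of the cut graph is a dart of Gamma tagged with the side of C on
   which it lies (the darts of C are doubled, the others get the side
   determined by the next dart of C met around their vertex).  Around a
   vertex off C the rotation is unchanged; around either copy of a vertex v
   of C it follows rot through the darts of Gamma at v on that side and
   crosses the cut from one dart of C at v to the other.  These two darts are
   one incoming and one outgoing, so crossings alternate just like steps of
   rot, and the darts at each copy of v still form a single orbit. *)

Lemma head_filter (T : Type) (P : pred T) (x0 : T) (s : seq T) :
  head x0 (filter P s) = nth x0 s (find P s).
Proof. by elim: s => //= a s IHs; case: (P a). Qed.

Section FirstHit.
Variables (T : finType) (f : T -> T) (P : pred T).
Hypothesis f_inj : injective f.

Definition first_hit (x : T) : T := head x [seq y <- traject f (f x) #|T| | P y].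

Lemma mem_traject_succ x y : fconnect f x y -> y \in traject f (f x) #|T|.
Proof.
move=> xy; have fxy : fconnect f (f x) y.
  by apply: connect_trans xy; rewrite fconnect_sym // fconnect1.
apply/trajectP; exists (findex f (f x) y); last by rewrite iter_findex.
exact: leq_trans (findex_max fxy) (max_card _).
Qed.

Lemma first_hit_spec x y : fconnect f x y -> P y ->
  exists2 k, first_hit x = iter k.+1 f x &
    P (iter k.+1 f x) /\ forall i, i < k -> ~~ P (iter i.+1 f x).
Proof.
move=> xy Py; set s := traject f (f x) #|T|.
have has_s : has P s by apply/hasP; exists y => //; apply: mem_traject_succ.
have lt_find : find P s < #|T| by rewrite -(size_traject f (f x) #|T|) -/s -has_find.
have nth_s i : i < #|T| -> nth x s i = iter i.+1 f x.
  by move=> lt_i; rewrite (set_nth_default (f x)) ?size_traject // nth_traject // iterSr.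
exists (find P s); first by rewrite /first_hit -/s (head_filter P) nth_s.
split; first by rewrite -nth_s // nth_find.
by move=> i lt_ik; rewrite -nth_s ?(ltn_trans lt_ik) // before_find.
Qed.

Lemma first_hit_iter x k : P (iter k.+1 f x) ->
  (forall i, i < k -> ~~ P (iter i.+1 f x)) -> first_hit x = iter k.+1 f x.
Proof.
move=> Pk before_k.
have [k' -> [Pk' before_k']] := first_hit_spec (fconnect_iter f k.+1 x) Pk.
case: (ltngtP k k') => [lt_kk'|lt_k'k|-> //].
  by have := before_k' _ lt_kk'; rewrite Pk.
by have := before_k _ lt_k'k; rewrite Pk'.
Qed.

Lemma first_hit_rec x y : fconnect f x y -> P y ->
  first_hit x = if P (f x) then f x else first_hit (f x).
Proof.
move=> xy Py; have [[|k] -> [Pk before_k]] := first_hit_spec xy Py.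
  by rewrite /= in Pk; rewrite Pk.
have /negbTE -> : ~~ P (f x) by exact: (before_k 0).
rewrite (@first_hit_iter (f x) k) -?iterSr // => i lt_ik.
by rewrite -iterSr; apply: before_k.
Qed.

Lemma first_hit_neq x y : fconnect f x y -> P y -> y != x -> first_hit x != x.
Proof.
move=> xy Py yx; have [k -> [_ before_k]] := first_hit_spec xy Py.
have j_max := findex_max xy; have iter_j := iter_findex xy.
set j := findex f x y in j_max iter_j.
have j_gt0 : 0 < j by rewrite lt0n; apply: contraNneq yx => j0; rewrite -iter_j j0.
have le_kj : k < j.
  rewrite ltnNge; apply/negP => le_jk.
  by have := before_k j.-1; rewrite prednK // iter_j Py => /(_ le_jk).
apply/eqP => iter_kx; have := findex_iter (leq_ltn_trans le_kj j_max).
by rewrite iter_kx findex0.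
Qed.

End FirstHit.

Section CutSurgery.
Variables (V E : finType) (h t : E -> V) (rot : E * bool -> E * bool) (c : seq E).
Hypotheses (rot_rotation : is_rotation h t rot) (rot_hyperbolic : hyperbolic rot)
  (c_simple : simple_closed_path h t c).

Local Notation dart := (E * bool)%type.
Local Notation dv := (dvert h t).
Local Notation onC := (onC t c).

Definition inC : pred dart := fun d => d.1 \in c.
(* [firstC rot c] is convertible to [nextC]. *)
Local Notation nextC := (first_hit rot inC).

Lemma rot_inj : injective rot. Proof. by case: rot_rotation. Qed.

Lemma dvert_rot d : dv (rot d) = dv d. Proof. by case: rot_rotation => _ ->. Qed.

Lemma fconnect_rot d d' : dv d = dv d' -> fconnect rot d d'.
Proof. by case: rot_rotation => _ _; apply. Qed.

Lemma dvert_iter n d : dv (iter n rot d) = dv d.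
Proof. by elim: n => //= n IHn; rewrite dvert_rot. Qed.

Lemma dvert_fconnect d d' : fconnect rot d d' -> dv d' = dv d.
Proof. by move=> dd'; rewrite -(iter_findex dd') dvert_iter. Qed.

Lemma c_uniq : uniq c. Proof. by case: c_simple => _ _ /map_uniq. Qed.

Lemma tail_inj_in_c : {in c &, injective t}.
Proof.
case: c_simple => _ _; elim: c => //= e s IHs /andP [tNs uniq_s] e1 e2.
rewrite !inE => /predU1P [-> | e1s] /predU1P [-> | e2s] // te12.
- by case/negP: tNs; rewrite te12 map_f.
- by case/negP: tNs; rewrite -te12 map_f.
- exact: IHs.
Qed.

Lemma head_next_c e : e \in c -> h e = t (next c e).
Proof. by case: c_simple => _ c_cycle _ /(next_cycle c_cycle) /eqP. Qed.

Lemma onC_dvert d : inC d -> onC (dv d).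
Proof.
case: d => e [] ec; rewrite /onC /dvert /=; last exact: map_f.
by rewrite head_next_c // map_f ?mem_next.
Qed.

Lemma inC_dart_inj d1 d2 :
  inC d1 -> inC d2 -> dv d1 = dv d2 -> d1.2 = d2.2 -> d1 = d2.
Proof.
case: d1 d2 => e1 b1 [e2 b2]; rewrite /inC /= => e1c e2c + b12; subst b2.
case: b1; rewrite /dvert /= => v12; last by rewrite (tail_inj_in_c e1c e2c v12).
suff : next c e1 = next c e2 by move/(congr1 (prev c)); rewrite !prev_next ?c_uniq // => ->.
by apply: tail_inj_in_c; rewrite ?mem_next // -!head_next_c.
Qed.

Lemma inC_dart_exists v b : onC v -> exists d, [/\ inC d, dv d = v & d.2 = b].
Proof.
case/mapP => e ec ->; case: b; last by exists (e, false).
exists (prev c e, true); split; rewrite /inC /dvert //= ?mem_prev //.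
by rewrite head_next_c ?mem_prev // next_prev ?c_uniq.
Qed.

Lemma orbit_meets_C d : onC (dv d) -> exists2 y, fconnect rot d y & inC y.
Proof.
by case/(inC_dart_exists true) => y [yC vy _]; exists y => //; apply: fconnect_rot.
Qed.

Lemma nextC_spec d : onC (dv d) ->
  [/\ fconnect rot d (nextC d), inC (nextC d) & exists k, nextC d = iter k.+1 rot d].
Proof.
case/orbit_meets_C => y dy yC.
have [k -> [kC _]] := first_hit_spec rot_inj dy yC.
by split; [apply: fconnect_iter | | exists k].
Qed.

Lemma nextC_rec d : onC (dv d) -> nextC d = if inC (rot d) then rot d else nextC (rot d).
Proof. by case/orbit_meets_C => y dy yC; rewrite (first_hit_rec rot_inj dy yC). Qed.

Lemma nextC_inC d : inC d -> [/\ inC (nextC d), dv (nextC d) = dv d & (nextC d).2 = ~~ d.2].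
Proof.
move=> dC; have vC := onC_dvert dC.
have [dn nC _] := nextC_spec vC; have vn := dvert_fconnect dn.
have [y [yC vy yb]] := inC_dart_exists (~~ d.2) vC.
have yd : y != d by apply/eqP => yd; move: yb; rewrite yd; case: (d.2).
have nd := first_hit_neq rot_inj (fconnect_rot (esym vy)) yC yd.
split => //; apply/eqP; apply: contraNT nd => nb.
by apply/eqP/inC_dart_inj => //; move: nb; case: (d.2); case: (nextC d).2.
Qed.

Local Notation cdart := (cutE c * bool)%type.
Local Notation crot := (cut_rot rot c).
Local Notation cdv := (dvert (cut_head h t rot c) (cut_tail t rot c)).

Definition lift (x : dart) (s : bool) : cdart := (mkE c x.1 s, x.2).

(* The side on which [lift x s] lies; [(x.1 \in c) && s] is the copy bit
   that [mkE] actually stores. *)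
Definition side (x : dart) (s : bool) : bool := dside rot c x ((x.1 \in c) && s).

Definition cut_step (x : dart) (s : bool) : dart :=
  if inC x && (x.2 == side x s) then nextC x else rot x.

Lemma lift_eq x s s' : (inC x -> s = s') -> lift x s = lift x s'.
Proof.
by move=> ss'; congr pair; apply: val_inj => /=; case xC: (x.1 \in c); rewrite //= ss'.
Qed.

Lemma lift_inj x1 s1 x2 s2 :
  lift x1 s1 = lift x2 s2 -> x1 = x2 /\ (inC x1 -> s1 = s2).
Proof.
case: x1 x2 => e1 b1 [e2 b2] eq12.
have [e12 b12] : e1 = e2 /\ b1 = b2 by case: eq12 => -> _ ->.
subst e2 b2; split => // e1c; move/(congr1 (fun X => val X.1)): eq12.
by rewrite /= (e1c : e1 \in c) => -[].
Qed.

Lemma lift_ind (Q : cdart -> Prop) : (forall x s, Q (lift x s)) -> forall X, Q X.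
Proof.
move=> Qlift [[[e s] /= es] b]; have := Qlift (e, b) s; congr Q.
by congr pair; apply: val_inj => /=; case: (e \in c) es; case: s.
Qed.

Lemma side_inC x s : inC x -> side x s = s.
Proof. by rewrite /side /dside /inC => ->. Qed.

Lemma side_notC x s : ~~ inC x -> side x s = (nextC x).2.
Proof. by rewrite /side /dside /inC => /negbTE ->. Qed.

Lemma cut_rot_lift x s : crot (lift x s) = lift (cut_step x s) (side x s).
Proof. by case: x. Qed.

Lemma cut_dvert_lift x s : cdv (lift x s) = mkV t c (dv x) (side x s).
Proof. by case: x => e []. Qed.

Lemma mkV_eq v s s' : (onC v -> s = s') -> mkV t c v s = mkV t c v s'.
Proof. by move=> ss'; apply: val_inj => /=; case vC: (onC v); rewrite //= ss'. Qed.

Lemma mkV_inj v s v' s' :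
  mkV t c v s = mkV t c v' s' -> v = v' /\ onC v && s = onC v' && s'.
Proof. by move/(congr1 val) => /= [-> ->]. Qed.

Lemma dvert_cut_step x s : dv (cut_step x s) = dv x.
Proof.
rewrite /cut_step; case: ifP => [/andP [xC _] | _]; last exact: dvert_rot.
by case: (nextC_inC xC).
Qed.

Lemma side_cut_step x s : onC (dv x) -> side (cut_step x s) (side x s) = side x s.
Proof.
move=> xv; rewrite /cut_step.
have [xC|xNC] := boolP (inC x); last first.
  rewrite /= (side_notC s xNC) (nextC_rec xv).
  case: ifP => [rxC|/negbT rxNC]; [exact: side_inC | exact: side_notC].
rewrite (side_inC s xC) /=; have [nC _] := nextC_inC xC.
have [_ _|xs] := eqP; first exact: side_inC.
rewrite (nextC_rec xv); case: ifP => [rxC _|/negbT rxNC nb]; first exact: side_inC.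
by rewrite (side_notC _ rxNC) nb; move/eqP: xs; case: (x.2); case: s.
Qed.

Lemma cut_rot_hyperbolic : hyperbolic crot.
Proof.
elim/lift_ind => x s; rewrite cut_rot_lift /= /cut_step.
by case: ifP => [/andP [xC _] | _]; [case: (nextC_inC xC) | apply: rot_hyperbolic].
Qed.

Lemma cut_dvert_rot X : cdv (crot X) = cdv X.
Proof.
elim/lift_ind: X => x s; rewrite cut_rot_lift !cut_dvert_lift dvert_cut_step.
by apply: mkV_eq; apply: side_cut_step.
Qed.

(* Hyperbolicity is what prevents a crossing of the cut from landing on a
   [rot]-successor on the same side. *)
Lemma cross_neq_rot x1 s1 x2 s2 :
  inC x1 -> x1.2 = side x1 s1 -> ~~ (inC x2 && (x2.2 == side x2 s2)) ->
  side x1 s1 = side x2 s2 -> nextC x1 != rot x2.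
Proof.
move=> x1C cross1 no_cross2 side12; have [nC _ nb] := nextC_inC x1C.
apply/eqP => n_rx2; have x2b : x2.2 = side x2 s2.
  by apply: (can_inj negbK); rewrite -rot_hyperbolic -n_rx2 nb cross1 side12.
have [x2C|x2NC] := boolP (inC x2); first by move: no_cross2; rewrite x2C x2b eqxx.
have rx2C : inC (rot x2) by rewrite -n_rx2.
have x2v : onC (dv x2) by rewrite -dvert_rot onC_dvert.
move: x2b; rewrite (side_notC _ x2NC) (nextC_rec x2v) rx2C /= rot_hyperbolic.
by case: (x2.2).
Qed.

Lemma cut_rot_inj : injective crot.
Proof.
elim/lift_ind => x1 s1; elim/lift_ind => x2 s2.
rewrite !cut_rot_lift => /lift_inj[]; rewrite /cut_step.
case: ifP => [/andP [x1C /eqP cross1] | /negbT no_cross1];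
  case: ifP => [/andP [x2C /eqP cross2] | /negbT no_cross2] step12 side12.
- have [n1C v1 b1] := nextC_inC x1C; have [_ v2 b2] := nextC_inC x2C.
  have x12 : x1 = x2.
    apply: inC_dart_inj => //; first by rewrite -v1 -v2 step12.
    by apply: (can_inj negbK); rewrite -b1 -b2 step12.
  subst x2; apply: lift_eq => _.
  by rewrite -(side_inC s1 x1C) -(side_inC s2 x1C) -cross1 -cross2.
- have [n1C _ _] := nextC_inC x1C.
  by have := cross_neq_rot x1C cross1 no_cross2 (side12 n1C); rewrite step12 eqxx.
- have [n2C _ _] := nextC_inC x2C; rewrite -step12 in n2C.
  have := cross_neq_rot x2C cross2 no_cross1 (esym (side12 n2C)).
  by rewrite step12 eqxx.
- have x12 := rot_inj step12; subst x2; apply: lift_eq => x1C {side12}.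
  move: no_cross1 no_cross2; rewrite x1C !(side_inC _ x1C) /=.
  by case: (x1.2) s1 s2 => -[] [].
Qed.

Lemma notC_offC d : ~~ onC (dv d) -> ~~ inC d.
Proof. exact/contra/onC_dvert. Qed.

Lemma iter_cut_rot_offC n x s :
  ~~ onC (dv x) -> iter n crot (lift x s) = lift (iter n rot x) s.
Proof.
move=> xNv; elim: n => //= n ->; rewrite cut_rot_lift /cut_step.
have xnNC : ~~ inC (iter n rot x) by apply: notC_offC; rewrite dvert_iter.
rewrite (negbTE xnNC) /=; apply: lift_eq => rxnC.
have : ~~ onC (dv (iter n.+1 rot x)) by rewrite dvert_iter.
by move/notC_offC; rewrite /= rxnC.
Qed.

Lemma fconnect_lift_nextC x s : ~~ inC x -> onC (dv x) ->
  fconnect crot (lift x s) (lift (nextC x) (nextC x).2).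
Proof.
move=> xNC xv; have [_ nC [k nk]] := nextC_spec xv.
elim: k x s xNC xv nC nk => [|k IHk] x s xNC xv nC nk;
  have step : crot (lift x s) = lift (rot x) (nextC x).2
    by rewrite cut_rot_lift /cut_step (negbTE xNC) (side_notC _ xNC).
all: apply: connect_trans (fconnect1 crot (lift x s)) _; rewrite step.
all: have := nextC_rec xv; case: ifP => [_ -> | /negbT rxNC nx]; first exact: connect0.
  by move: rxNC; rewrite -[rot x]/(iter 1 rot x) -nk nC.
rewrite nx in nC nk *; apply: IHk; rewrite ?dvert_rot //.
by rewrite nk iterSr.
Qed.

Lemma fconnect_lift_nextC_inC x s : inC x -> fconnect crot (lift x s) (lift (nextC x) s).
Proof.
move=> xC; have [_ _ nb] := nextC_inC xC.
have [xs|xNs] := boolP (x.2 == s).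
  by apply: connect1; rewrite /= cut_rot_lift /cut_step xC (side_inC _ xC) xs.
apply: connect_trans (fconnect1 crot (lift x s)) _.
rewrite cut_rot_lift /cut_step xC (side_inC _ xC) (negbTE xNs) /=.
have rxv : onC (dv (rot x)) by rewrite dvert_rot onC_dvert.
rewrite (nextC_rec (onC_dvert xC)) in nb *.
case: ifP nb => [_ _|/negbT rxNC nb]; first exact: connect0.
have -> : s = (nextC (rot x)).2 by rewrite nb; move: xNs; case: (x.2); case: s.
exact: fconnect_lift_nextC.
Qed.

Lemma fconnect_lift_inC x y s :
  inC x -> inC y -> dv x = dv y -> fconnect crot (lift x s) (lift y s).
Proof.
move=> xC yC vxy; have [nC vn nb] := nextC_inC xC.
have [yx|yNx] := eqVneq y.2 x.2; first by rewrite (inC_dart_inj yC xC) ?connect0.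
suff -> : y = nextC x by apply: fconnect_lift_nextC_inC.
apply: inC_dart_inj; rewrite ?vn ?nb //.
by move: yNx; case: (y.2); case: (x.2).
Qed.

Lemma fconnect_lift_to_inC x s : onC (dv x) ->
  exists2 z, inC z /\ dv z = dv x & fconnect crot (lift x s) (lift z (side x s)).
Proof.
move=> xv; have [xC|xNC] := boolP (inC x).
  by exists x; rewrite ?side_inC ?connect0.
have [xn nC _] := nextC_spec xv.
exists (nextC x); first by split; last exact: dvert_fconnect.
by rewrite side_notC //; apply: fconnect_lift_nextC.
Qed.

Lemma cut_rot_fconnect X Y : cdv X = cdv Y -> fconnect crot X Y.
Proof.
elim/lift_ind: X => x s; elim/lift_ind: Y => y s'.
rewrite !cut_dvert_lift => /mkV_inj [vxy sides].
have [xv|xNv] := boolP (onC (dv x)).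
  have yv : onC (dv y) by rewrite -vxy.
  rewrite -vxy xv /= in sides.
  have [z [zC vz] xz] := fconnect_lift_to_inC s xv.
  have [w [wC vw] yw] := fconnect_lift_to_inC s' yv.
  apply: connect_trans xz _; apply: connect_trans (fconnect_lift_inC _ zC wC _) _.
    by rewrite vz vw.
  by rewrite sides fconnect_sym //; apply: cut_rot_inj.
have xy := fconnect_rot vxy; rewrite -(iter_findex xy).
rewrite (@lift_eq _ s' s); last by move/onC_dvert; rewrite dvert_iter (negbTE xNv).
by rewrite -iter_cut_rot_offC // fconnect_iter.
Qed.

Lemma cut_rot_rotation : is_rotation (cut_head h t rot c) (cut_tail t rot c) crot.
Proof. by split; [apply: cut_rot_inj | apply: cut_dvert_rot | apply: cut_rot_fconnect]. Qed.

End CutSurgery.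

Theorem proposition3p16 (V E : finType) (h t : E -> V)
    (rot : E * bool -> E * bool) (c : seq E) :
  is_rotation h t rot ->
  hyperbolic rot ->
  connected h t ->
  simple_closed_path h t c ->
  is_rotation (cut_head h t rot c) (cut_tail t rot c) (cut_rot rot c)
  /\ hyperbolic (cut_rot rot c).
Proof.
move=> rot_rotation rot_hyperbolic _ c_simple.
split; first exact: cut_rot_rotation rot_rotation rot_hyperbolic c_simple.
exact: cut_rot_hyperbolic rot_rotation rot_hyperbolic c_simple.
Qed.
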